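(* Let $F$ be an algebraically closed field of positive characteristic $p$, and let $\phi \in F(z)$ be a rational function with a single critical point $c \in \mathbb{P}^1(F)$. Then there exist polynomials $q_0, \ldots, q_n \in F[z]$ and a nonzero element $a \in F$ such that $\phi \circ \sigma(z) = [q_0(z^p), q_1(z^p), \ldots, q_n(z^p) + az]$, where $\sigma(z) = z$ if $c = \infty$ and $\sigma(z) = c + 1/z$ otherwise.
   Context: Continued fraction expansion: for $\psi \in F(z)$, repeated division gives unique polynomials $f_0, \ldots, f_n \in F[z]$, with $f_1, \ldots, f_n$ nonconstant, such that $\psi = f_0 + \cfrac{1}{f_1 + \cfrac{1}{\ddots + \cfrac{1}{f_n}}}$, written $\psi = [f_0, \ldots, f_n]$. Critical points: for $x \in F$, choose a fractional linear transformation $\tau$ over $F$ with $\tau(\phi(x)) \neq \infty$; $x$ is a critical point if $\frac{d(\tau\circ\phi)}{dz}(x) = 0$. The point $\infty$ is a critical point if $\frac{d(\tau \circ \phi(1/z))}{dz}\big|_{z=0} = 0$ for such $\tau$ with $\tau(\phi(\infty))\neq\infty$. These notions are independent of $\tau$. *)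

From HB Require Import structures.
From mathcomp Require Import all_boot all_order all_algebra.
Set Implicit Arguments. Unset Strict Implicit. Unset Printing Implicit Defensive.
Import Order.TTheory GRing.Theory Num.Theory.
Local Open Scope ring_scope.

Notation ratfun F := {fraction {poly F}}.

Section RatFun.
Variable F : fieldType.
Local Notation K := (ratfun F).

Definition rpoly (p : {poly F}) : K := tofrac p.

Definition rz : K := rpoly 'X.

(* composition f(s) for f, s in F(z) (meaningful when s is nonconstant):
   f = N/D with N/D a representative of f, f(s) := N(s)/D(s). *)
Definition rcomp (f s : K) : K :=
  let r := repr f in
  (map_poly (fun a : F => rpoly a%:P) \n_r).[s] / (map_poly (fun a : F => rpoly a%:P) \d_r).[s].

(* g in F(z) is regular (finite) at x in F, with derivative value v at x:
   g = N/D with D(x) <> 0, and v = (N'(x) D(x) - N(x) D'(x)) / D(x)^2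
   (the formal derivative of N/D evaluated at x). *)
Definition deriv_at (g : K) (x v : F) : Prop :=
  exists N D : {poly F}, [/\ D.[x] != 0, g = rpoly N / rpoly D &
    v = (N^`().[x] * D.[x] - N.[x] * D^`().[x]) / D.[x] ^+ 2].

(* tau o g for the fractional linear transformation tau(w) = (a w + b)/(c w + d),
   ad - bc <> 0.  The condition [c g + d != 0] excludes the case where tau o g
   is the constant infinity. *)
Definition mobius_comp (a b c d : F) (g : K) : K :=
  (rpoly a%:P * g + rpoly b%:P) / (rpoly c%:P * g + rpoly d%:P).

(* x in F is a critical point of g: for some fractional linear transformation
   tau with tau(g(x)) <> infinity, d(tau o g)/dz (x) = 0. *)
Definition critical_fin (g : K) (x : F) : Prop :=
  exists a b c d : F, [/\ a * d - b * c != 0,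
    rpoly c%:P * g + rpoly d%:P != 0 & deriv_at (mobius_comp a b c d g) x 0].

(* points of P^1(F): [Some x] is x in F, [None] is infinity *)
Definition critical (phi : K) (x : option F) : Prop :=
  match x with
  | Some x => critical_fin phi x
  | None => critical_fin (rcomp phi rz^-1) 0
  end.

Fixpoint contfrac (s : seq {poly F}) : K :=
  match s with
  | [::] => 0
  | [:: f] => rpoly f
  | f :: s' => rpoly f + (contfrac s')^-1
  end.

Definition sigma (c : option F) : K :=
  match c with
  | None => rz
  | Some c0 => rpoly c0%:P + rz^-1
  end.

End RatFun.

From HB Require Import structures.
From mathcomp Require Import all_boot all_order all_algebra.
From mathcomp Require Import ring zify.
Import Order.TTheory GRing.Theory Num.Theory.
Set Implicit Arguments. Unset Strict Implicit. Unset Printing Implicit Defensive.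
Local Open Scope ring_scope.

(* Write phi = N/D in lowest terms and let W = N'D - ND' be the Wronskian.  A finite
   root of W is a critical point of phi, so W has no root other than c.  If c is
   infinite, W is a nonzero constant.  If c is finite, infinity is not critical,
   which forces W to have the maximal degree 2n - 2 (n = max(deg N, deg D)); hence
   W = k (z - c)^(2n-2), and substituting z -> c + 1/z (and clearing z^n) gives
   phi(sigma(z)) = N2/D2 with constant Wronskian -k.
   For a pair with constant Wronskian, Euclidean division N = q D + R gives
   W(N, D) = q' D^2 + W(R, D), and comparing degrees forces q' = 0: in
   characteristic p the quotient is a polynomial in z^p, while W(D, R) = -W(N, D)
   lets the Euclidean algorithm continue.  It ends with a constant denominator d,
   where N' = W(N, d)/d is constant, i.e. N = Q(z^p) + a z. *)

Lemma frac_numden (R : idomainType) (x : {fraction R}) :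
  x = tofrac \n_(repr x) / tofrac \d_(repr x).
Proof.
have hd : \d_(repr x) != 0 by case: (repr x).
suff h : x * tofrac \d_(repr x) = tofrac \n_(repr x) by rewrite -h mulfK ?tofrac_eq0.
rewrite -{1}[x]reprK; move: hd; case: (repr x) => [[n d] /= hd] _.
unlock tofrac.
transitivity (\pi_({fraction R})%qT (FracField.mulf (@mkRatio _ (n, d) hd) (Ratio d 1))).
  by symmetry; exact: pi_mul.
apply/eqmodP; rewrite /= FracField.equivfE /FracField.mulf /=.
by rewrite !numden_Ratio ?mulf_neq0 ?oner_eq0 //=; apply/eqP; ring.
Qed.

Section RatFun.
Variable F : fieldType.
Local Notation K := (ratfun F).
Local Notation z := (rz F).

HB.instance Definition _ := GRing.RMorphism.copy (@rpoly F) (@tofrac {poly F}).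

Definition ratfunC (a : F) : K := rpoly a%:P.
HB.instance Definition _ := GRing.RMorphism.copy ratfunC (@rpoly F \o polyC).

Lemma rpoly_inj : injective (@rpoly F).
Proof. by move=> P Q /eqP; rewrite tofrac_eq => /eqP. Qed.

Lemma rpoly_eq0 (P : {poly F}) : (rpoly P == 0) = (P == 0).
Proof. exact: tofrac_eq0. Qed.

Lemma rz_neq0 : z != 0.
Proof. by rewrite rpoly_eq0 polyX_eq0. Qed.

Lemma ratfun_coprime (x : K) :
  exists N D : {poly F}, [/\ D != 0, coprimep N D & x = rpoly N / rpoly D].
Proof.
set n := \n_(repr x); set d := \d_(repr x).
have hd : d != 0 by rewrite /d; case: (repr x).
set g := gcdp n d.
have hg : g != 0 by rewrite gcdp_eq0 negb_and hd orbT.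
have en : n = n %/ g * g by rewrite divpK // dvdp_gcdl.
have ed : d = d %/ g * g by rewrite divpK // dvdp_gcdr.
exists (n %/ g), (d %/ g); split.
- by apply: contra_neq hd => e; rewrite ed e mul0r.
- by apply: coprimep_div_gcd; rewrite hd orbT.
rewrite {1}(frac_numden x) -/n -/d [in LHS]en [in LHS]ed !rmorphM /=.
by rewrite -mulf_div divff ?mulr1 ?rpoly_eq0.
Qed.

Definition psubst (s : K) (P : {poly F}) : K := (map_poly ratfunC P).[s].

Lemma psubstM s P Q : psubst s (P * Q) = psubst s P * psubst s Q.
Proof. by rewrite /psubst rmorphM hornerM. Qed.

Lemma psubst_comp s P Q : psubst s (P \Po Q) = psubst (psubst s Q) P.
Proof. by rewrite /psubst map_comp_poly horner_comp. Qed.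

Lemma psubst_z P : psubst z P = rpoly P.
Proof.
rewrite /psubst; elim/poly_ind: P => [|P c IH]; first by rewrite !rmorph0 horner0.
by rewrite !rmorphD !rmorphM /= map_polyX map_polyC hornerMXaddC IH.
Qed.

Lemma rcomp_div s (N D : {poly F}) : D != 0 ->
    (forall P, P != 0 -> psubst s P != 0) ->
  rcomp (rpoly N / rpoly D) s = psubst s N / psubst s D.
Proof.
move=> hD hs; rewrite /rcomp -/ratfunC -!/(psubst _ _).
set x := rpoly N / rpoly D.
have hd : \d_(repr x) != 0 by case: (repr x).
have : rpoly \n_(repr x) / rpoly \d_(repr x) = rpoly N / rpoly D by rewrite -frac_numden.
move/eqP; rewrite eqr_div ?rpoly_eq0 // -!rmorphM => /eqP/rpoly_inj e.
by apply/eqP; rewrite eqr_div ?hs // -!psubstM e.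
Qed.

Lemma rcomp_z (N D : {poly F}) : D != 0 -> rcomp (rpoly N / rpoly D) z = rpoly N / rpoly D.
Proof. by move=> hD; rewrite rcomp_div // => [|P]; rewrite !psubst_z ?rpoly_eq0. Qed.

(** * Reversal of polynomials *)

Definition revp n (Q : {poly F}) : {poly F} := \poly_(i < n.+1) Q`_(n - i).

Lemma coef_revp n (Q : {poly F}) k : (revp n Q)`_k = if (k <= n)%N then Q`_(n - k) else 0.
Proof. by rewrite coef_poly ltnS. Qed.

Lemma horner0_revp n (Q : {poly F}) : (revp n Q).[0] = Q`_n.
Proof. by rewrite horner_coef0 coef_revp subn0. Qed.

Lemma revp0 n : revp n 0 = 0.
Proof. by apply/polyP => k; rewrite coef_revp !coef0 if_same. Qed.

Lemma revpB n (P Q : {poly F}) : revp n (P - Q) = revp n P - revp n Q.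
Proof. by apply/polyP => k; rewrite coefB !coef_revp coefB; case: ifP; rewrite ?subr0. Qed.

Lemma revp_eq0 n (Q : {poly F}) : (size Q <= n.+1)%N -> (revp n Q == 0) = (Q == 0).
Proof.
move=> hs; have [->|hQ] := eqVneq Q 0; first by rewrite revp0 eqxx.
apply/eqP => e; move: hQ; rewrite -lead_coef_eq0 lead_coefE.
move: (congr1 (fun P : {poly F} => P`_(n - (size Q).-1)) e) => /=.
rewrite coef_revp leq_subr coef0 subKn; first by move=> ->; rewrite eqxx.
by move: hs; case: (size Q).
Qed.

Lemma revpS n (Q : {poly F}) : (size Q <= n.+1)%N -> revp n.+1 Q = 'X * revp n Q.
Proof.
move=> hs; apply/polyP => -[|k]; rewrite coefXM coef_revp /=; first by rewrite nth_default.
by rewrite coef_revp ltnS subSS.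
Qed.

Lemma revpXn n c : revp n (c *: 'X^n) = c%:P.
Proof.
apply/polyP => k; rewrite coef_revp coefZ coefXn coefC.
case: k => [|k]; rewrite ?subn0 ?eqxx ?mulr1 //=; case: ifP => // hk.
by rewrite (_ : ((n - k.+1)%N == n) = false) ?mulr0 //; apply/negbTE; lia.
Qed.

Lemma mulX_deriv_revp n (Q : {poly F}) :
  'X * (revp n.+1 Q)^`() = n.+1%:R *: revp n.+1 Q - revp n Q^`().
Proof.
apply/polyP => -[|k]; rewrite coefXM coefB coefZ !coef_revp /=.
  by rewrite !subn0 coef_deriv mulr_natl subrr.
rewrite coef_deriv coef_revp.
case: (ltnP n k) => hk; first by rewrite !ifN -?leqNgt ?mul0rn ?mulr0 ?subr0 //; lia.
rewrite ltnS hk subSS.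
have [hkn|hnk] := ltnP k n; last first.
  have -> : k = n by lia.
  by rewrite subr0 mulr_natl.
rewrite coef_deriv -subSn // subSS mulr_natl -mulrnBr; last lia.
by congr (_ *+ _); lia.
Qed.

Lemma rpoly_revp n (Q : {poly F}) : (size Q <= n.+1)%N ->
  rpoly (revp n Q) = psubst z^-1 Q * z ^+ n.
Proof.
move=> hs; rewrite /psubst (horner_coef_wide _ (n := n.+1)) ?size_map_poly //.
rewrite /revp (poly_def n.+1) rmorph_sum big_distrl (reindex_inj rev_ord_inj) /=.
apply: eq_bigr => i _; have hi : (i <= n)%N by rewrite -ltnS.
rewrite subSS subKn // coef_map -mul_polyC rmorphM rmorphXn /=.
by rewrite -mulrA exprVn [z ^- i * _]mulrC -expfB_cond // (negPf rz_neq0).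
Qed.

Lemma revpM m n (P Q : {poly F}) : (size P <= m.+1)%N -> (size Q <= n.+1)%N ->
  revp (m + n) (P * Q) = revp m P * revp n Q.
Proof.
move=> hP hQ; apply: rpoly_inj; rewrite rmorphM /= !rpoly_revp // ?psubstM ?exprD.
  by rewrite mulrACA.
by have := size_mul_leq P Q; lia.
Qed.

Lemma psubst_invz_neq0 (P : {poly F}) : P != 0 -> psubst z^-1 P != 0.
Proof.
move=> hP; apply: contraNneq hP => e; move: (rpoly_revp (leqSpred (size P))).
by rewrite e mul0r => /eqP; rewrite rpoly_eq0 revp_eq0 ?leqSpred.
Qed.

Lemma rcomp_invz n (N D : {poly F}) : (size N <= n.+1)%N -> (size D <= n.+1)%N ->
  D != 0 -> rcomp (rpoly N / rpoly D) z^-1 = rpoly (revp n N) / rpoly (revp n D).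
Proof.
move=> hN hD hD0; rewrite rcomp_div //; last exact: psubst_invz_neq0.
by rewrite !rpoly_revp // -mulf_div divff ?mulr1 // expf_neq0 // rz_neq0.
Qed.

Lemma comp_XaddC_eq0 (P : {poly F}) c : (P \Po ('X + c%:P) == 0) = (P == 0).
Proof. by rewrite -!size_poly_eq0 size_comp_poly2 // size_XaddC. Qed.

Lemma rcomp_sigma c (N D : {poly F}) : D != 0 ->
  rcomp (rpoly N / rpoly D) (sigma (Some c)) =
  rcomp (rpoly (N \Po ('X + c%:P)) / rpoly (D \Po ('X + c%:P))) z^-1.
Proof.
have psubst_sigma P : psubst (sigma (Some c)) P = psubst z^-1 (P \Po ('X + c%:P)).
  rewrite psubst_comp /psubst rmorphD /= map_polyX map_polyC /=.
  by rewrite hornerD hornerX hornerC addrC.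
move=> hD; rewrite !rcomp_div ?comp_XaddC_eq0 ?psubst_sigma //.
  exact: psubst_invz_neq0.
by move=> P hP; rewrite psubst_sigma psubst_invz_neq0 ?comp_XaddC_eq0.
Qed.

(** * Wronskians *)

Definition wronskian (N D : {poly F}) : {poly F} := N^`() * D - N * D^`().

Lemma wronskianC (N D : {poly F}) : wronskian D N = - wronskian N D.
Proof. by rewrite /wronskian opprB mulrC [D * _]mulrC. Qed.

Lemma wronskian_const_neq0r (N D : {poly F}) a :
  wronskian N D = a%:P -> a != 0 -> D != 0.
Proof.
move=> hW; apply: contraNneq => hD; rewrite -polyC_eq0 -hW hD.
by rewrite /wronskian deriv0 !mulr0 subrr.
Qed.

Lemma wronskian_comp (P Q R : {poly F}) :
  wronskian (P \Po R) (Q \Po R) = (wronskian P Q \Po R) * R^`().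
Proof. by rewrite /wronskian !deriv_comp comp_polyB !comp_polyM; ring. Qed.

Lemma size_deriv_leq (P : {poly F}) : (size P^`() <= (size P).-1)%N.
Proof.
have [->|hP] := eqVneq P 0; first by rewrite deriv0 size_poly0.
by have := lt_size_deriv hP; case: (size P).
Qed.

Lemma size_wronskian_leq (P Q : {poly F}) :
  (size (wronskian P Q) <= (size P + size Q).-2)%N.
Proof.
have hl (A B : {poly F}) : (size (A^`() * B)%R <= (size A + size B).-2)%N.
  have [->|hA] := eqVneq A^`() 0; first by rewrite mul0r size_poly0.
  move: hA; rewrite -size_poly_eq0.
  have := size_deriv_leq A; have := size_mul_leq A^`() B; lia.
apply: leq_trans (size_add _ _) _; rewrite size_opp geq_max hl /=.
by rewrite mulrC addnC hl.
Qed.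

Lemma mulX_wronskian_revp n (P Q : {poly F}) :
    (size P <= n.+2)%N -> (size Q <= n.+2)%N ->
  'X * wronskian (revp n.+1 P) (revp n.+1 Q) = - revp n.*2.+1 (wronskian P Q).
Proof.
move=> hP hQ.
have hP' : (size P^`() <= n.+1)%N by have := size_deriv_leq P; lia.
have hQ' : (size Q^`() <= n.+1)%N by have := size_deriv_leq Q; lia.
have e1 : revp n.*2.+1 (P * Q^`()) = revp n.+1 P * revp n Q^`().
  by rewrite -revpM // addSn addnn.
have e2 : revp n.*2.+1 (P^`() * Q) = revp n P^`() * revp n.+1 Q.
  by rewrite -revpM // addnS addnn.
transitivity ('X * (revp n.+1 P)^`() * revp n.+1 Q - revp n.+1 P * ('X * (revp n.+1 Q)^`())).
  by rewrite /wronskian; ring.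
by rewrite !mulX_deriv_revp /wronskian revpB e1 e2 -!mul_polyC; ring.
Qed.

Lemma size_wronskian n (P Q : {poly F}) : (size P <= n.+1)%N -> (size Q <= n.+1)%N ->
  (size (wronskian P Q) <= (n + n).-1)%N.
Proof.
case: n => [|n] hP hQ; first by have := size_wronskian_leq P Q; lia.
have hW := size_wronskian_leq P Q.
(* the leading terms of P'Q and PQ' cancel *)
have hc : (wronskian P Q)`_n.*2.+1 = 0.
  move: (congr1 (fun R : {poly F} => R`_0) (mulX_wronskian_revp hP hQ)) => /=.
  by rewrite coefXM coefN coef_revp subn0 => /esym/eqP; rewrite oppr_eq0 => /eqP.
apply/leq_sizeP => i hi; have [->|hni] := eqVneq i n.*2.+1; first exact: hc.
apply: nth_default; apply: leq_trans hW _; move: hni => /eqP; rewrite -addnn; lia.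
Qed.

Lemma wronskian_revp n (P Q : {poly F}) : (size P <= n.+1)%N -> (size Q <= n.+1)%N ->
  wronskian (revp n P) (revp n Q) = - revp (n + n).-2 (wronskian P Q).
Proof.
case: n => [|n] hP hQ.
  have wr0 (A B : {poly F}) : (size A <= 1)%N -> (size B <= 1)%N -> wronskian A B = 0.
    by move=> hA hB; apply/size_poly_leq0P; apply: (size_wronskian hA hB).
  by rewrite wr0 ?size_poly // (wr0 P Q) // revp0 oppr0.
have hX : 'X != 0 :> {poly F} by rewrite polyX_eq0.
apply: (mulfI hX); rewrite mulX_wronskian_revp // mulrN -revpS.
  by rewrite addSn addnS addnn.
by have := size_wronskian hP hQ; rewrite addSn addnS addnn.
Qed.

(** * Critical points *)

Lemma mobius_comp_id (g : K) : mobius_comp 1 0 0 1 g = g.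
Proof. by rewrite /mobius_comp !rmorph0 !rmorph1 mul0r mul1r add0r addr0 divr1. Qed.

Lemma mobius_comp_inv (g : K) : mobius_comp 0 1 1 0 g = g^-1.
Proof. by rewrite /mobius_comp !rmorph0 !rmorph1 mul0r mul1r add0r addr0 div1r. Qed.

Lemma deriv_at_div (N D : {poly F}) x : D.[x] != 0 ->
  deriv_at (rpoly N / rpoly D) x ((wronskian N D).[x] / D.[x] ^+ 2).
Proof. by move=> hDx; exists N, D; rewrite /wronskian !hornerE. Qed.

Lemma critical_fin_div (N D : {poly F}) x : D != 0 ->
    (N.[x] != 0) || (D.[x] != 0) -> root (wronskian N D) x ->
  critical_fin (rpoly N / rpoly D) x.
Proof.
move=> hD hND /eqP hW.
have [hDx|hDx] := eqVneq D.[x] 0; last first.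
  exists 1, 0, 0, 1; rewrite mulr1 mulr0 subr0 oner_eq0 !rmorph0 !rmorph1 mul0r add0r.
  by rewrite oner_eq0 mobius_comp_id; split=> //; have := deriv_at_div N hDx; rewrite hW mul0r.
rewrite hDx eqxx orbF in hND.
have hN : N != 0 by apply: contraNneq hND => ->; rewrite horner0.
exists 0, 1, 1, 0; rewrite mulr0 mul1r sub0r oppr_eq0 oner_eq0 !rmorph0 !rmorph1 mul1r addr0.
rewrite mobius_comp_inv invf_div mulf_neq0 ?invr_eq0 ?rpoly_eq0 //; split=> //.
by have := deriv_at_div D hND; rewrite wronskianC hornerN hW oppr0 mul0r.
Qed.

Lemma root_wronskian_critical (N D : {poly F}) x : D != 0 -> coprimep N D ->
  root (wronskian N D) x -> critical_fin (rpoly N / rpoly D) x.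
Proof.
move=> hD hND; apply: critical_fin_div => //.
have [hN|//] := eqVneq N.[x] 0; apply: (coprimep_root hND); exact/eqP.
Qed.

Lemma wronskian_top_coef n (N D : {poly F}) : D != 0 ->
    maxn (size N) (size D) = n.+1 -> ~ critical (rpoly N / rpoly D) None ->
  (wronskian N D)`_((n + n).-2) != 0.
Proof.
move=> hD0 hn hinf; apply/negP => /eqP hW; apply: hinf.
have hN : (size N <= n.+1)%N by rewrite -hn leq_maxl.
have hD : (size D <= n.+1)%N by rewrite -hn leq_maxr.
(* at infinity phi is [revp n N / revp n D] at 0, and its Wronskian there is [- W`_(2n-2)] *)
rewrite /critical (rcomp_invz hN hD hD0); apply: critical_fin_div.
- by rewrite revp_eq0.
- rewrite !horner0_revp; case/orP: (leq_total (size N) (size D)) => h.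
    move: hn; rewrite (maxn_idPr h) => hn; rewrite -[n]/(n.+1.-1) -hn -lead_coefE.
    by rewrite lead_coef_eq0 hD0 orbT.
  move: hn; rewrite (maxn_idPl h) => hn; rewrite -[n]/(n.+1.-1) -hn -lead_coefE.
  by rewrite lead_coef_eq0 -size_poly_eq0 hn.
by rewrite /root wronskian_revp // hornerN horner0_revp hW oppr0.
Qed.

(** * Continued fractions in characteristic p *)

Lemma deriv_eq0_comp_Xp p (P : {poly F}) : p \in [pchar F] -> P^`() = 0 ->
  exists Q, P = Q \Po 'X^p.
Proof.
move=> hp hd; exists (\poly_(i < size P) P`_(i * p)).
have p0 : (0 < p)%N by apply/prime_gt0/(pcharf_prime hp).
apply/polyP => k; rewrite coef_comp_poly_Xn // coef_poly.
case: ifP => hk.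
  rewrite divnK //; case: ltnP => // hs.
  by apply: nth_default; apply: leq_trans hs (leq_div _ _).
case: k hk => [|k] hk; first by rewrite dvdn0 in hk.
move: (congr1 (fun Q : {poly F} => Q`_k) hd) => /=.
rewrite coef_deriv coef0 -mulr_natr => /eqP; rewrite mulf_eq0.
by rewrite -(dvdn_pcharf hp) hk orbF => /eqP.
Qed.

Lemma wronskian_divp (N D : {poly F}) :
  wronskian N D = (N %/ D)^`() * D ^+ 2 + wronskian (N %% D) D.
Proof. by rewrite {1}(divp_eq N D) /wronskian derivD derivM; ring. Qed.

Lemma deriv_divp_wronskian_const (N D : {poly F}) a :
  (1 < size D)%N -> wronskian N D = a%:P -> (N %/ D)^`() = 0.
Proof.
move=> hD hW; apply/eqP/negP => /negP hq.
have hD0 : D != 0 by rewrite -size_poly_gt0; lia.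
have e : (N %/ D)^`() * D ^+ 2 = a%:P - wronskian (N %% D) D.
  by rewrite -hW wronskian_divp addrK.
(* the left-hand side has degree at least 2 deg D, the right-hand side less *)
have hR := ltn_modpN0 N hD0.
have hWR := size_wronskian_leq (N %% D) D.
have := size_add a%:P (- wronskian (N %% D) D).
rewrite size_opp -e expr2 !size_mul ?mulf_neq0 //.
move: hq hD hR hWR (size_polyC_leq1 a); rewrite -size_poly_gt0.
set s1 := size (N %/ D)^`(); set s2 := size (wronskian _ _); set s3 := size (N %% D).
set s4 := size a%:P; set s5 := size D; lia.
Qed.

(* [frob_contfrac p [:: q_0; ...; q_n] a] is [[q_0(z^p), ..., q_n(z^p) + a z]]. *)
Definition frob_contfrac p (q : seq {poly F}) (a : F) : K :=
  contfrac (rcons [seq q`_i \Po 'X^p | i <- iota 0 (size q).-1]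
                  ((last 0 q \Po 'X^p) + a *: 'X)).

Lemma contfrac_cons (f : {poly F}) l : l != [::] ->
  contfrac (f :: l) = rpoly f + (contfrac l)^-1.
Proof. by case: l. Qed.

Lemma frob_contfrac_cons p Q q a : q != [::] ->
  frob_contfrac p (Q :: q) a = rpoly (Q \Po 'X^p) + (frob_contfrac p q a)^-1.
Proof.
case: q => // Q' q _; rewrite /frob_contfrac -contfrac_cons -?size_eq0 ?size_rcons //.
by rewrite /= (iotaDl 1 0) -map_comp.
Qed.

Section FrobeniusContfrac.
Variables (p : nat) (hp : p \in [pchar F]).

Lemma frob_contfrac_const (N D : {poly F}) a :
    (size D <= 1)%N -> wronskian N D = a%:P -> a != 0 ->
  exists Q a', a' != 0 /\ rpoly N / rpoly D = frob_contfrac p [:: Q] a'.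
Proof.
move=> hD1 hW ha; have hD0 := wronskian_const_neq0r hW ha.
have eD : D = (D`_0)%:P by apply: size1_polyC.
set d := D`_0 in eD; have hd : d != 0 by apply: contraNneq hD0 => hd; rewrite eD hd.
rewrite eD in hW *.
have hN' : N^`() = (a / d)%:P.
  apply: (mulIf (_ : d%:P != 0)); rewrite ?polyC_eq0 // -polyCM divfK //.
  by move: hW; rewrite /wronskian derivC mulr0 subr0.
have [Q eQ] : exists Q, N - (a / d) *: 'X = Q \Po 'X^p.
  by apply: deriv_eq0_comp_Xp; rewrite // derivB derivZ derivX hN' alg_polyC subrr.
exists (d^-1 *: Q), (a / d / d); split; first by rewrite !mulf_neq0 ?invr_eq0.
rewrite /frob_contfrac /= comp_polyZ -eQ scalerBr scalerA.
rewrite (_ : d^-1 * (a / d) = a / d / d) ?subrK; last by rewrite mulrC.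
rewrite -mul_polyC -polyCV rmorphM rmorphV /=; first by rewrite mulrC.
by rewrite poly_unitE size_polyC hd coefC unitfE.
Qed.

Lemma frob_contfrac_step (N D : {poly F}) a :
    (1 < size D)%N -> wronskian N D = a%:P -> a != 0 ->
  exists Q0, [/\ N %/ D = Q0 \Po 'X^p, wronskian D (N %% D) = (- a)%:P &
    rpoly N / rpoly D = rpoly (Q0 \Po 'X^p) + (rpoly D / rpoly (N %% D))^-1].
Proof.
move=> hD hW ha; have hD0 := wronskian_const_neq0r hW ha.
have hq := deriv_divp_wronskian_const hD hW.
have hWR : wronskian (N %% D) D = a%:P by rewrite -hW [RHS]wronskian_divp hq mul0r add0r.
have [Q0 eQ0] := deriv_eq0_comp_Xp hp hq.
exists Q0; split=> //; first by rewrite wronskianC hWR polyCN.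
rewrite invf_div -eQ0 {1}(divp_eq N D) rmorphD rmorphM /= mulrDl mulfK //.
by rewrite rpoly_eq0.
Qed.

Lemma frob_contfrac_wronskian_lt n (N D : {poly F}) a :
    (size D <= n)%N -> (size D < size N)%N -> wronskian N D = a%:P -> a != 0 ->
  exists (q : seq {poly F}) (a' : F), [/\ (0 < size q)%N, a' != 0,
    (forall i, (i < (size q).-1)%N -> (1 < size (nth 0%R q i))%N) &
    rpoly N / rpoly D = frob_contfrac p q a'].
Proof.
elim: n N D a => [|n IH] N D a hDn hND hW ha; have hD0 := wronskian_const_neq0r hW ha.
  by move: hDn; rewrite leqn0 size_poly_eq0 (negPf hD0).
have [hD1|hD1] := leqP (size D) 1.
  by have [Q [a' [ha' ->]]] := frob_contfrac_const hD1 hW ha; exists [:: Q], a'.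
have [Q0 [eQ0 hWR ->]] := frob_contfrac_step hD1 hW ha.
have hRD : (size (N %% D)%R < size D)%N by rewrite ltn_modpN0 // -size_poly_gt0; lia.
have hRn : (size (N %% D)%R <= n)%N by lia.
have hna : - a != 0 by rewrite oppr_eq0.
have [q [a' [hq ha' hmid ->]]] := IH D (N %% D) (- a) hRn hRD hWR hna.
exists (Q0 :: q), a'; split=> //; last by rewrite frob_contfrac_cons // -size_eq0 -lt0n.
case=> [|i] /= hi; last by apply: hmid; lia.
have : (1 < size (N %/ D)%R)%N by rewrite size_divp // ltn_subRL addn1 prednK // size_poly_gt0.
rewrite eQ0; case: (leqP (size Q0) 1) => // /size1_polyC ->.
by rewrite comp_polyC size_polyC; case: (_ != 0).
Qed.

Lemma frob_contfrac_wronskian (N D : {poly F}) a :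
    wronskian N D = a%:P -> a != 0 ->
  exists (q : seq {poly F}) (a' : F), [/\ (0 < size q)%N, a' != 0,
    (forall i, (0 < i < (size q).-1)%N -> (1 < size (nth 0%R q i))%N) &
    rpoly N / rpoly D = frob_contfrac p q a'].
Proof.
move=> hW ha; have hD0 := wronskian_const_neq0r hW ha.
have [hD1|hD1] := leqP (size D) 1.
  by have [Q [a' [ha' ->]]] := frob_contfrac_const hD1 hW ha; exists [:: Q], a'; split=> // -[].
have [Q0 [_ hWR ->]] := frob_contfrac_step hD1 hW ha.
have hna : - a != 0 by rewrite oppr_eq0.
have [q [a' [hq ha' hmid ->]]] :=
  frob_contfrac_wronskian_lt (leqnn _) (ltn_modpN0 N hD0) hWR hna.
exists (Q0 :: q), a'; split=> //; last by rewrite frob_contfrac_cons // -size_eq0 -lt0n.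
by case=> [|i] //= hi; apply: hmid; rewrite ltn_predRL.
Qed.

End FrobeniusContfrac.

End RatFun.

Section ClosedField.
Variable F : closedFieldType.

Lemma rootfree_polyC (V : {poly F}) : (forall x, ~~ root V x) ->
  exists2 k, k != 0 & V = k%:P.
Proof.
move=> hV; have s1 : size V = 1%N.
  by apply/eqP/negPn/negP => /closed_rootP [x hx]; move: (hV x); rewrite hx.
exists (lead_coef V); first by rewrite lead_coef_eq0 -size_poly_eq0 s1.
by rewrite lead_coefE s1; apply: size1_polyC; rewrite s1.
Qed.

Lemma root0_polyXn (V : {poly F}) : (forall x, root V x -> x = 0) ->
  V = lead_coef V *: 'X^((size V).-1).
Proof.
move=> hV; have [r er] := closed_field_poly_normal V.
have r0 : r = nseq (size r) 0.
  apply/all_pred1P/allP => x hx; apply/eqP/hV.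
  by rewrite er /root hornerZ (rootP (_ : root _ x)) ?mulr0 // root_prod_XsubC.
rewrite r0 big_nseq iter_mulr_1 subr0 in er.
have [->|hV0] := eqVneq V 0; first by rewrite lead_coef0 scale0r.
rewrite {1}er; congr (_ *: 'X^_).
by rewrite [in RHS]er size_scale ?lead_coef_eq0 // size_polyXn.
Qed.

Lemma wronskian_sigma_const n (N D : {poly F}) c :
    maxn (size N) (size D) = n.+1 -> (wronskian N D)`_((n + n).-2) != 0 ->
    (forall x, root (wronskian N D) x -> x = c) ->
  exists2 k, k != 0 &
    wronskian (revp n (N \Po ('X + c%:P))) (revp n (D \Po ('X + c%:P))) = k%:P.
Proof.
move=> hn hWm hroot; set W := wronskian N D; set m := (n + n).-2.
have hN : (size N <= n.+1)%N by rewrite -hn leq_maxl.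
have hD : (size D <= n.+1)%N by rewrite -hn leq_maxr.
have hsW : size W = m.+1.
  have := size_wronskian hN hD; have : (m < size W)%N.
    by rewrite ltnNge; apply: contra hWm => h; rewrite nth_default.
  rewrite /m; set s := size W; lia.
have size_T : size ('X + c%:P) = 2 by rewrite size_XaddC.
set V := W \Po ('X + c%:P).
have hV : forall x, root V x -> x = 0.
  have hT x : ('X + c%:P).[x] = x + c by rewrite hornerD hornerX hornerC.
  move=> x; rewrite /root horner_comp hT => hx; have e := hroot _ hx.
  by apply: (addIr c); rewrite e add0r.
have hsV : size V = m.+1 by rewrite size_comp_poly2.
exists (- lead_coef V); first by rewrite oppr_eq0 lead_coef_eq0 -size_poly_eq0 hsV.
rewrite wronskian_revp ?size_comp_poly2 // wronskian_comp derivD derivX derivC addr0 mulr1.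
by rewrite -/V [in LHS](root0_polyXn hV) hsV revpXn polyCN.
Qed.

End ClosedField.

Unset Implicit Arguments.

Theorem corollary1p2 (F : closedFieldType) (p : nat) (hp : p \in [pchar F])
    (phi : ratfun F) (c : option F)
    (hc : forall x : option F, critical phi x <-> x = c) :
  exists (q : seq {poly F}) (a : F),
    [/\ (0 < size q)%N, a != 0,
      (forall i, (0 < i < (size q).-1)%N -> (1 < size (nth 0%R q i))%N) &
      rcomp phi (sigma c) =
        contfrac (rcons [seq (q`_i \Po 'X^p) | i <- iota 0 (size q).-1]
                        ((last 0 q \Po 'X^p) + a *: 'X))].
Proof.
have [N [D [hD hND ephi]]] := ratfun_coprime phi; subst phi.
have root_crit x : root (wronskian N D) x -> Some x = c.
  by move=> hx; apply/hc/root_wronskian_critical.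
suff [N2 [D2 [k [hk hW2 ->]]]] : exists N2 D2 k, [/\ k != 0, wronskian N2 D2 = k%:P &
    rcomp (rpoly N / rpoly D) (sigma c) = rpoly N2 / rpoly D2].
  by have [q [a [? ? ? ->]]] := frob_contfrac_wronskian hp hW2 hk; exists q, a.
case: c hc root_crit => [c|] hc root_crit; last first.
  have [k hk eW] : exists2 k, k != 0 & wronskian N D = k%:P.
    by apply: rootfree_polyC => x; apply/negP => /root_crit.
  by exists N, D, k; rewrite rcomp_z.
set n := (maxn (size N) (size D)).-1.
have hn : maxn (size N) (size D) = n.+1 by rewrite prednK // leq_max !size_poly_gt0 hD orbT.
have hWm : (wronskian N D)`_((n + n).-2) != 0 by apply: wronskian_top_coef => // /hc.
have [k hk hW2] := wronskian_sigma_const hn hWm (fun x hx => Some_inj (root_crit x hx)).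
exists (revp n (N \Po ('X + c%:P))), (revp n (D \Po ('X + c%:P))), k; split=> //.
by rewrite rcomp_sigma // (rcomp_invz (n := n)) ?size_comp_poly2 ?size_XaddC ?comp_XaddC_eq0
  -?hn ?leq_maxl ?leq_maxr.
Qed.
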